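(* Let $\mathbf A$ be an algebra with a Mal'cev term, let $n\ge1$, let $q_n$ be a strong $n$-cube term of $\mathbf A$, and let $\alpha_0,\dots,\alpha_{n-1}$ be congruences of $\mathbf A$. Then a tuple $\mathbf a\in A^{2^n}$ belongs to $\Delta(\alpha_0,\dots,\alpha_{n-1})$ if and only if both (a) for every $j<n$, $(a_k\mid k<2^n,\ k_{(j)}=0)\in\Delta(\alpha_i\mid i<n,\ i\neq j)$, and (b) $q_n(a_0,\dots,a_{2^n-2})\equiv a_{2^n-1}\pmod{[\alpha_0,\dots,\alpha_{n-1}]}$.
   Context: A Mal'cev term is a ternary term $q$ with $q(x,x,y)\approx y\approx q(y,x,x)$. For $k\ge0$, $k_{(i)}$ denotes the $i$-th binary digit of $k$ (least significant is $i=0$). For $i<n$ let $\rho_i(k)$ be $k$ with its $i$-th binary digit set to $0$. A strong $n$-cube term is a $(2^n-1)$-ary term $q_n$ such that for each $i<n$ the identity $q_n(y_{\rho_i(0)},\dots,y_{\rho_i(2^n-2)})\approx y_{\rho_i(2^n-1)}$ holds. Tuples in $A^m$ are indexed by $0,\dots,m-1$; $(a_k\mid\phi(k))$ denotes the tuple of the $a_k$ with $\phi(k)$ in increasing order of $k$. For $a,b\in A$ and $i<n$, $\mathbf c_i^n(a,b)\in A^{2^n}$ has $k$-th coordinate $a$ if $k_{(i)}=0$ and $b$ if $k_{(i)}=1$. $\Delta(\alpha_0,\dots,\alpha_{n-1})$ is the subuniverse of $\mathbf A^{2^n}$ generated by $\{\mathbf c_i^n(a,b): i<n,\ (a,b)\in\alpha_i\}$,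 and $\Delta()=A$; $\Delta(\alpha_i\mid i\in I)$ means $\Delta$ of the $\alpha_i$, $i\in I$, listed in increasing order of $i$. Higher commutator (Bulatov): for congruences $\alpha_0,\dots,\alpha_{n-1},\gamma$, say $\alpha_0,\dots,\alpha_{n-2}$ centralize $\alpha_{n-1}$ modulo $\gamma$ if for all tuples $\mathbf a_i,\mathbf b_i$ ($i<n$, with $\mathbf a_i\neq\mathbf b_i$ congruent modulo $\alpha_i$ coordinatewise) and every term operation $t$ such that $t(\mathbf x_0,\dots,\mathbf x_{n-2},\mathbf a_{n-1})\equiv_\gamma t(\mathbf x_0,\dots,\mathbf x_{n-2},\mathbf b_{n-1})$ for all $(\mathbf x_0,\dots,\mathbf x_{n-2})\in(\{\mathbf a_0,\mathbf b_0\}\times\dots\times\{\mathbf a_{n-2},\mathbf b_{n-2}\})\setminus\{(\mathbf b_0,\dots,\mathbf b_{n-2})\}$, we have $t(\mathbf b_0,\dots,\mathbf b_{n-2},\mathbf a_{n-1})\equiv_\gamma t(\mathbf b_0,\dots,\mathbf b_{n-2},\mathbf b_{n-1})$. $[\alpha_0,\dots,\alpha_{n-1}]$ is the smallest such $\gamma$. *)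

From mathcomp Require Import all_boot.
Set Implicit Arguments. Unset Strict Implicit. Unset Printing Implicit Defensive.

Definition bit (k i : nat) : bool := odd (k %/ 2 ^ i).

Definition rho (i k : nat) : nat := if bit k i then k - 2 ^ i else k.

Section UA.
Variables (F : Type) (ar : F -> nat) (A : Type).
Variable op : forall f : F, ('I_(ar f) -> A) -> A.

Inductive term (V : Type) : Type :=
  | Var : V -> term V
  | App : forall f : F, ('I_(ar f) -> term V) -> term V.

Fixpoint eval (V : Type) (e : V -> A) (t : term V) : A :=
  match t with
  | Var v => e v
  | App f ts => op (fun j => eval e (ts j))
  end.

Definition has_malcev_term : Prop :=
  exists q : term 'I_3, forall x y : A,
    eval (fun i : 'I_3 => nth y [:: x; x; y] i) q = y /\
    eval (fun i : 'I_3 => nth y [:: y; x; x] i) q = y.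

Definition strong_cube_term (n : nat) (q : term 'I_(2 ^ n - 1)) : Prop :=
  forall i, i < n -> forall y : nat -> A,
    eval (fun k : 'I_(2 ^ n - 1) => y (rho i k)) q = y (rho i (2 ^ n - 1)).

Definition congruence (alpha : A -> A -> Prop) : Prop :=
  [/\ (forall x, alpha x x),
      (forall x y, alpha x y -> alpha y x),
      (forall x y z, alpha x y -> alpha y z -> alpha x z) &
      (forall f (xs ys : 'I_(ar f) -> A),
          (forall j, alpha (xs j) (ys j)) -> alpha (op xs) (op ys))].

Definition subuniverse_pow (m : nat) (S : ('I_m -> A) -> Prop) : Prop :=
  forall f (xs : 'I_(ar f) -> 'I_m -> A),
    (forall j, S (xs j)) -> S (fun k => op (fun j => xs j k)).

Definition Sg_pow (m : nat) (G : ('I_m -> A) -> Prop) (x : 'I_m -> A) : Prop :=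
  forall S, subuniverse_pow S -> (forall z, G z -> S z) -> S x.

Definition cvec (n i : nat) (a b : A) : 'I_(2 ^ n) -> A :=
  fun k => if bit k i then b else a.

(* A tuple of A^{2^n} is given by a function x : nat -> A (only x 0, ...,
   x (2^n-1) matter).  Delta() = A (i.e. every tuple) when n = 0. *)
Definition Delta (n : nat) (alpha : nat -> A -> A -> Prop) (x : nat -> A) : Prop :=
  n = 0 \/
  Sg_pow (fun z : 'I_(2 ^ n) -> A =>
            exists i, i < n /\ exists a b, alpha i a b /\
              forall k, z k = @cvec n i a b k)
         (fun k : 'I_(2 ^ n) => x k).

(* Bulatov's centrality: alpha 0, ..., alpha (n-2) centralize alpha (n-1)
   modulo gamma.  Tuple a_i, b_i has length m i; a term operation of arity
   m_0 + ... + m_{n-1} is a term whose variables are the pairs (i, k),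
   k < m i. *)
Definition centralizes (n : nat) (alpha : nat -> A -> A -> Prop)
    (gamma : A -> A -> Prop) : Prop :=
  forall (m : 'I_n -> nat) (a b : forall i : 'I_n, 'I_(m i) -> A),
    (forall i : 'I_n, exists k, a i k <> b i k) ->
    (forall (i : 'I_n) k, alpha i (a i k) (b i k)) ->
    forall t : term {i : 'I_n & 'I_(m i)},
    let val (s : nat -> bool) (last : bool) :=
      eval (fun v : {i : 'I_n & 'I_(m i)} =>
              let i := projT1 v in
              if (i == n.-1 :> nat) then (if last then b i (projT2 v) else a i (projT2 v))
              else (if s i then b i (projT2 v) else a i (projT2 v))) t in
    (forall s : nat -> bool, (exists i, i < n.-1 /\ s i = false) ->
        gamma (val s false) (val s true)) ->
    gamma (val (fun _ => true) false) (val (fun _ => true) true).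

Definition hcomm (n : nat) (alpha : nat -> A -> A -> Prop) (x y : A) : Prop :=
  forall gamma, congruence gamma -> centralizes n alpha gamma -> gamma x y.

End UA.

Definition drop_cong (A : Type) (n j : nat) (alpha : nat -> A -> A -> Prop) :
    nat -> A -> A -> Prop :=
  fun l => alpha (nth 0 [seq i <- iota 0 n | i != j] l).

Definition face0 (A : Type) (n j : nat) (a : nat -> A) : nat -> A :=
  fun l => a (nth 0 [seq k <- iota 0 (2 ^ n) | ~~ bit k j] l).

(* Write [corner x y] for (x, ..., x, y) \in Delta(alpha_0, ..., alpha_(n-1)).  With the
   Mal'cev term, [corner] is a congruence, and it satisfies Bulatov's term condition, since the
   values of a term at the vertices of a cube of c_i(a, b)'s form an element of Delta that can be
   patched edge by edge.  Conversely every element of Delta is such a cube of term values, so a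
   congruence satisfying the term condition contains [corner]: hence [corner] is the commutator.
   An element of Delta restricts to its faces.  If all faces of [a] lie in the smaller Deltas,
   then d_k := q_n(a_(k AND m) | m < 2^n - 1) lies in Delta; by the strong cube identities d
   agrees with [a] except at the top vertex, where it is q_n(a_0, ..., a_(2^n-2)).  Mal'cev
   interpolation between a, d and a constant tuple then shows that [a] lies in Delta iff
   [corner (q_n(a_0, ..., a_(2^n-2))) (a_(2^n-1))]. *)

From Stdlib Require Import PeanoNat FunctionalExtensionality IndefiniteDescription Classical.
From mathcomp Require Import all_boot zify.
Set Implicit Arguments. Unset Strict Implicit. Unset Printing Implicit Defensive.

Local Notation tb := Nat.testbit.

Lemma powE i : 2 ^ i = Nat.pow 2 i.
Proof. by elim: i => [|i IH] //=; rewrite expnS IH; lia. Qed.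

Lemma divE m d : 0 < d -> m %/ d = Nat.div m d.
Proof.
move=> d_gt0; apply: (@Nat.div_unique _ _ _ (m %% d)); first exact/ltP/ltn_pmod.
by rewrite {1}(divn_eq m d); lia.
Qed.

Lemma modE m d : 0 < d -> m %% d = Nat.modulo m d.
Proof.
move=> d_gt0; apply: (@Nat.mod_unique _ _ (m %/ d)); first exact/ltP/ltn_pmod.
by rewrite {1}(divn_eq m d); lia.
Qed.

Lemma oddE m : odd m = Nat.odd m.
Proof.
elim: m => [|m IH] //=; rewrite Nat.odd_succ IH -Nat.negb_odd.
by case: (Nat.odd m).
Qed.

Lemma bitE k i : bit k i = tb k i.
Proof.
by rewrite /bit Nat.testbit_odd Nat.shiftr_div_pow2 oddE divE ?expn_gt0 // powE.
Qed.

Lemma eqbE a b : (a =? b) = (a == b).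
Proof. exact/Nat.eqb_spec/eqP. Qed.

Lemma testbit_pow2 i j : tb (2 ^ i) j = (i == j).
Proof. by rewrite powE Nat.pow2_bits_eqb eqbE. Qed.

Lemma testbit_ones j i : tb (Nat.ones j) i = (i < j).
Proof.
case: (ltnP i j) => h; first by rewrite Nat.ones_spec_low //; apply/ltP.
by rewrite Nat.ones_spec_high //; apply/leP.
Qed.

Lemma testbit_shiftl y k i : tb (Nat.shiftl y k) i = if i < k then false else tb y (i - k).
Proof.
case: (ltnP i k) => h; first by rewrite Nat.shiftl_spec_low //; apply/ltP.
by rewrite Nat.shiftl_spec_high' //; apply/leP.
Qed.

Lemma testbit_clearbit a i j : tb (Nat.clearbit a i) j = tb a j && (i != j).
Proof. by rewrite Nat.clearbit_eqb eqbE. Qed.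

Lemma testbit_pow2_high n x i : x < 2 ^ n -> n <= i -> tb x i = false.
Proof.
move=> x_lt n_le; rewrite -(Nat.mod_small x (Nat.pow 2 n)); last by rewrite -powE; apply/ltP.
by apply: Nat.mod_pow2_bits_high; apply/leP.
Qed.

Lemma testbit_ltn_pow2 n x : (forall i, n <= i -> tb x i = false) -> x < 2 ^ n.
Proof.
move=> high; have -> : x = Nat.modulo x (Nat.pow 2 n).
  apply: Nat.bits_inj => i; case: (ltnP i n) => hi.
    by rewrite Nat.mod_pow2_bits_low //; apply/ltP.
  by rewrite Nat.mod_pow2_bits_high ?high //; apply/leP.
rewrite powE; apply/ltP/Nat.mod_upper_bound.
by have := Nat.pow_nonzero 2 n; lia.
Qed.

Lemma testbit_inj_pow2 n x y : x < 2 ^ n -> y < 2 ^ n ->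
  (forall i, i < n -> tb x i = tb y i) -> x = y.
Proof.
move=> x_lt y_lt low; apply: Nat.bits_inj => i.
by case: (ltnP i n) => hi; [exact: low | rewrite !(testbit_pow2_high _ hi)].
Qed.

Lemma testbit_top n i : tb (2 ^ n - 1) i = (i < n).
Proof.
have -> : 2 ^ n - 1 = Nat.ones n by rewrite Nat.ones_equiv powE; lia.
exact: testbit_ones.
Qed.

Lemma top_ltn n : 2 ^ n - 1 < 2 ^ n.
Proof. by rewrite ltn_subLR ?expn_gt0. Qed.

Lemma exists_testbit_false n x : x < 2 ^ n -> x != 2 ^ n - 1 ->
  exists2 j, j < n & tb x j = false.
Proof.
move=> x_lt x_ne; case: (boolP [exists j : 'I_n, ~~ tb x j]).
  by case/existsP=> j; exists j => //; apply/negbTE.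
move/existsPn=> all1; case/eqP: x_ne; apply: (testbit_inj_pow2 x_lt (top_ltn n)).
by move=> i hi; rewrite testbit_top hi; apply/negPn/(all1 (Ordinal hi)).
Qed.

Lemma testbit_rho i k j : tb (rho i k) j = tb k j && (i != j).
Proof.
rewrite /rho bitE; case ki: (tb k i); last first.
  by case: (eqVneq i j) => [<-|]; rewrite ?ki ?andbT.
suff -> : k - 2 ^ i = Nat.clearbit k i by rewrite testbit_clearbit.
rewrite Nat.clearbit_spec' -Nat.sub_nocarry_ldiff -powE //.
apply: Nat.bits_inj_0 => m; rewrite Nat.ldiff_spec testbit_pow2.
by case: (eqVneq i m) => [<-|]; rewrite ?ki.
Qed.

Lemma lxor_ltn_pow2 n x y : x < 2 ^ n -> y < 2 ^ n -> Nat.lxor x y < 2 ^ n.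
Proof.
move=> x_lt y_lt; apply: testbit_ltn_pow2 => i hi.
by rewrite Nat.lxor_spec !(testbit_pow2_high _ hi).
Qed.

Lemma clearbit_ltn_pow2 n x i : x < 2 ^ n -> Nat.clearbit x i < 2 ^ n.
Proof.
move=> x_lt; apply: testbit_ltn_pow2 => k hk.
by rewrite testbit_clearbit (testbit_pow2_high x_lt).
Qed.

Lemma land_ltn_pow2 n x y : x < 2 ^ n -> Nat.land x y < 2 ^ n.
Proof.
move=> x_lt; apply: testbit_ltn_pow2 => i hi.
by rewrite Nat.land_spec (testbit_pow2_high x_lt).
Qed.

Lemma lxorKl x y : Nat.lxor x (Nat.lxor x y) = y.
Proof. by rewrite -Nat.lxor_assoc Nat.lxor_nilpotent Nat.lxor_0_l. Qed.

Lemma lxorKr x y : Nat.lxor (Nat.lxor x y) y = x.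
Proof. by rewrite Nat.lxor_assoc Nat.lxor_nilpotent Nat.lxor_0_r. Qed.

Fixpoint of_bits (s : nat -> bool) (m : nat) : nat :=
  if m is m'.+1 then Nat.lor (of_bits s m') (if s m' then 2 ^ m' else 0) else 0.

Lemma testbit_of_bits s m i : tb (of_bits s m) i = (i < m) && s i.
Proof.
elim: m => [|m IH] /=; first by rewrite Nat.bits_0.
have high : tb (if s m then 2 ^ m else 0) i = (i == m) && s m.
  by case: (s m); rewrite ?testbit_pow2 ?Nat.bits_0 ?andbF // andbT eq_sym.
rewrite Nat.lor_spec IH high ltnS [i <= m]leq_eqVlt andb_orl.
by case: (eqVneq i m) => [->|]; rewrite ?ltnn ?orbF //= orbC.
Qed.

Lemma of_bits_ltn s m : of_bits s m < 2 ^ m.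
Proof. by apply: testbit_ltn_pow2 => i hi; rewrite testbit_of_bits ltnNge hi. Qed.

(* [insbit j l] inserts a binary digit 0 at position [j] of [l];
   [delbit j x] deletes the digit at position [j] of [x]. *)
Definition insbit (j l : nat) : nat :=
  Nat.lor (Nat.land l (Nat.ones j)) (Nat.shiftl (Nat.shiftr l j) j.+1).
Definition delbit (j x : nat) : nat :=
  Nat.lor (Nat.land x (Nat.ones j)) (Nat.shiftl (Nat.shiftr x j.+1) j).

Lemma testbit_insbit j l i :
  tb (insbit j l) i = if i < j then tb l i else if i == j then false else tb l i.-1.
Proof.
rewrite /insbit Nat.lor_spec Nat.land_spec testbit_ones testbit_shiftl Nat.shiftr_spec'.
case: (ltngtP i j) => h.
- by rewrite andbT ltnS (ltnW h) orbF.
- by rewrite andbF ltnS leqNgt h; congr (tb l _); lia.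
- by rewrite h ltnSn andbF.
Qed.

Lemma testbit_delbit j x i : tb (delbit j x) i = tb x (bump j i).
Proof.
rewrite /delbit Nat.lor_spec Nat.land_spec testbit_ones testbit_shiftl Nat.shiftr_spec'.
rewrite /bump; case: (ltnP i j) => h; first by rewrite andbT orbF add0n.
by rewrite andbF; congr (tb x _); lia.
Qed.

Lemma testbit_insbit_bump j l i : tb (insbit j l) (bump j i) = tb l i.
Proof.
rewrite testbit_insbit /bump; case: (ltnP i j) => h.
  by rewrite add0n h.
by rewrite add1n !ifF //; lia.
Qed.

Lemma testbit_insbit_id j l : tb (insbit j l) j = false.
Proof. by rewrite testbit_insbit ltnn eqxx. Qed.

Lemma delbitK j x : tb x j = false -> insbit j (delbit j x) = x.
Proof.
move=> xj; apply: Nat.bits_inj => i; rewrite testbit_insbit.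
case: (ltngtP i j) => h; rewrite ?testbit_delbit /bump.
- by rewrite leqNgt h.
- by congr (tb x _); lia.
- by rewrite h xj.
Qed.

Lemma delbit_ltn n j x : j < n -> x < 2 ^ n -> delbit j x < 2 ^ n.-1.
Proof.
move=> j_lt x_lt; apply: testbit_ltn_pow2 => i hi.
by rewrite testbit_delbit (testbit_pow2_high x_lt) // /bump; lia.
Qed.

Lemma insbit_ltn n j l : j < n -> l < 2 ^ n.-1 -> insbit j l < 2 ^ n.
Proof.
move=> j_lt l_lt; apply: testbit_ltn_pow2 => i hi.
by rewrite testbit_insbit !ifF ?(testbit_pow2_high l_lt) //; lia.
Qed.

Lemma insbitE j l : insbit j l = l + l %/ 2 ^ j * 2 ^ j.
Proof.
have disjoint : Nat.land (Nat.land l (Nat.ones j)) (Nat.shiftl (Nat.shiftr l j) j.+1) = 0.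
  apply: Nat.bits_inj_0 => i; rewrite !Nat.land_spec testbit_ones testbit_shiftl.
  by case: (ltnP i j) => h; rewrite ?andbF // ifT ?andbF //; lia.
rewrite /insbit -Nat.lxor_lor // -Nat.add_nocarry_lxor // Nat.land_ones.
rewrite Nat.shiftl_mul_pow2 Nat.shiftr_div_pow2 -!powE -modE ?expn_gt0 //.
rewrite -divE ?expn_gt0 // expnS; move: (divn_eq l (2 ^ j)).
by move: (l %/ 2 ^ j) (l %% 2 ^ j) (2 ^ j) => D M P ->; nia.
Qed.

Lemma insbit_mono j : {homo insbit j : x y / x < y}.
Proof.
move=> x y lt_xy; rewrite !insbitE.
apply: (@leq_ltn_trans (x + y %/ 2 ^ j * 2 ^ j)); last by rewrite ltn_add2r.
by rewrite leq_add2l leq_mul2r leq_div2r ?orbT // ltnW.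
Qed.

Lemma bump_mono j : {homo bump j : x y / x < y}.
Proof. by move=> x y; rewrite /bump; case: (leqP j x); case: (leqP j y); lia. Qed.

Lemma filter_iota_eq_map (P : pred nat) N M (g : nat -> nat) :
  {homo g : x y / x < y} ->
  (forall k, k < N -> P k -> exists2 l, l < M & k = g l) ->
  (forall l, l < M -> g l < N /\ P (g l)) ->
  [seq k <- iota 0 N | P k] = map g (iota 0 M).
Proof.
move=> g_mono onto into; apply: (@irr_sorted_eq _ ltn); first exact: ltn_trans.
- exact: ltnn.
- by apply: sorted_filter; [exact: ltn_trans | exact: iota_ltn_sorted].
- by apply: (homo_sorted g_mono); exact: iota_ltn_sorted.
move=> k; rewrite mem_filter mem_iota add0n /=; apply/andP/mapP.
  by case=> Pk k_lt; have [l l_lt ->] := onto k k_lt Pk; exists l; rewrite ?mem_iota.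
by case=> l; rewrite mem_iota add0n /= => l_lt ->; have [] := into l l_lt.
Qed.

Lemma nth_face_index n j l : j < n -> l < 2 ^ n.-1 ->
  nth 0 [seq k <- iota 0 (2 ^ n) | ~~ bit k j] l = insbit j l.
Proof.
move=> j_lt l_lt; rewrite (eq_filter (fun k => congr1 negb (bitE k j))).
rewrite (@filter_iota_eq_map _ _ (2 ^ n.-1) (insbit j)).
- by rewrite (nth_map 0) ?size_iota // nth_iota.
- exact: insbit_mono.
- move=> k k_lt /negbTE kj; exists (delbit j k); first exact: delbit_ltn.
  by rewrite delbitK.
- by move=> l' l'_lt; rewrite insbit_ltn // testbit_insbit_id.
Qed.

Lemma bump_ltn n j l : l < n.-1 -> bump j l < n.
Proof. by rewrite /bump; case: (leqP j l); lia. Qed.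

Lemma unbump_ltn n j i : j < n -> i < n -> i != j -> unbump j i < n.-1.
Proof. by rewrite /unbump; case: (ltnP j i); lia. Qed.

Lemma nth_drop_index n j l : j < n -> l < n.-1 ->
  nth 0 [seq i <- iota 0 n | i != j] l = bump j l.
Proof.
move=> j_lt l_lt; rewrite (@filter_iota_eq_map _ _ n.-1 (bump j)).
- by rewrite (nth_map 0) ?size_iota // nth_iota.
- exact: bump_mono.
- move=> k k_lt k_ne; exists (unbump j k); last by rewrite unbumpK.
  exact: unbump_ltn.
- by move=> l' l'_lt; rewrite eq_sym neq_bump bump_ltn.
Qed.

Lemma land_top n m : m < 2 ^ n -> Nat.land (2 ^ n - 1) m = m.
Proof.
move=> m_lt; apply: Nat.bits_inj => i; rewrite Nat.land_spec testbit_top.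
by case: (ltnP i n) => // hi; rewrite (testbit_pow2_high m_lt hi).
Qed.

Section Algebra.
Variables (F : Type) (ar : F -> nat) (A : Type).
Variable op : forall f : F, ('I_(ar f) -> A) -> A.

Fixpoint rename V W (g : V -> W) (t : term ar V) : term ar W :=
  match t with
  | Var v => Var ar (g v)
  | App f ts => App (fun j => rename g (ts j))
  end.

Lemma eval_rename V W (g : V -> W) (e : W -> A) t :
  eval op e (rename g t) = eval op (e \o g) t.
Proof.
elim: t => [//|f ts IH] /=.
by congr (op _); apply: functional_extensionality => j; apply: IH.
Qed.

Fixpoint vars_below (N : nat) (t : term ar nat) : Prop :=
  match t with
  | Var v => v < N
  | App f ts => forall j, vars_below N (ts j)
  end.

Lemma exists_vars_below t : exists N, vars_below N t.
Proof.
have mono N N' s : N <= N' -> vars_below N s -> vars_below N' s.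
  move=> le_NN'; elim: s => [v /= v_lt|f ts IH /= ts_below j]; last exact: IH.
  exact: leq_trans v_lt le_NN'.
elim: t => [v|f ts IH]; first by exists v.+1 => /=.
have [N N_below] := fin_all_exists IH.
by exists (\max_j N j) => j; apply: mono (N_below j); apply: leq_bigmax.
Qed.

Lemma eq_eval_vars_below N t (e1 e2 : nat -> A) :
  vars_below N t -> (forall v, v < N -> e1 v = e2 v) -> eval op e1 t = eval op e2 t.
Proof.
move=> t_below e12; elim: t t_below => [v|f ts IH] /= t_below; first exact: e12.
by congr (op _); apply: functional_extensionality => j; apply: IH.
Qed.

Lemma Sg_pow_subuniverse m (G : ('I_m -> A) -> Prop) : subuniverse_pow op (Sg_pow op G).
Proof. by move=> f xs xsG S S_sub GS; apply: (S_sub) => j; apply: xsG. Qed.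

Lemma Sg_pow_eval m (G : ('I_m -> A) -> Prop) V (t : term ar V) (xs : V -> 'I_m -> A) :
  (forall v, Sg_pow op G (xs v)) -> Sg_pow op G (fun k => eval op (xs^~ k) t).
Proof.
move=> xsG; elim: t => [v|f ts IH] /=; first exact: xsG.
exact: (@Sg_pow_subuniverse _ _ f (fun j k => eval op (xs^~ k) (ts j)) IH).
Qed.

Lemma Sg_pow_comp m (G : ('I_m -> A) -> Prop) m' (G' : ('I_m' -> A) -> Prop)
    (phi : 'I_m' -> 'I_m) x :
  (forall z, G z -> Sg_pow op G' (z \o phi)) -> Sg_pow op G x -> Sg_pow op G' (x \o phi).
Proof.
move=> Gphi x_in; apply: (x_in (fun z => Sg_pow op G' (z \o phi))); last exact: Gphi.
by move=> f xs xsG; apply: (@Sg_pow_subuniverse _ _ f (fun j => xs j \o phi)).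
Qed.

(* Children are merged by renaming variable [v] of the [j]-th child to [pickle (v, j)]. *)
Lemma Sg_pow_term m (G : ('I_m -> A) -> Prop) z0 x : G z0 -> Sg_pow op G x ->
  exists (t : term ar nat) (g : nat -> 'I_m -> A),
    (forall v, G (g v)) /\ x = fun k => eval op (g^~ k) t.
Proof.
move=> Gz0 x_in; pose Rep z := exists (t : term ar nat) (g : nat -> 'I_m -> A),
  (forall v, G (g v)) /\ z = fun k => eval op (g^~ k) t.
apply: (x_in Rep) => [f xs xs_term|z Gz]; last by exists (Var ar 0), (fun=> z).
have [tg tgP] := fin_all_exists xs_term; have [g0 xsE] := fin_all_exists tgP.
pose g w := if unpickle w is Some (v, j) then g0 j v else z0.
exists (App (fun j => rename (fun v => pickle (v, j)) (tg j))), g.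
split=> [w|]; first by rewrite /g; case: unpickle => [[v j]|] //; case: (xsE j).
apply: functional_extensionality => k /=; congr (op _).
apply: functional_extensionality => j; rewrite eval_rename (xsE j).2.
by congr eval; apply: functional_extensionality => v; rewrite /= /g pickleK.
Qed.

Definition Delta_gen n (alpha : nat -> A -> A -> Prop) : ('I_(2 ^ n) -> A) -> Prop :=
  fun z => exists i, i < n /\ exists a b, alpha i a b /\ forall k, z k = @cvec A n i a b k.

Definition in_Delta n alpha (x : nat -> A) : Prop :=
  Sg_pow op (@Delta_gen n alpha) (fun k : 'I_(2 ^ n) => x k).

Lemma DeltaE n alpha x : 0 < n -> Delta op n alpha x <-> in_Delta n alpha x.
Proof. by move=> n_gt0; split=> [[n0|//]|]; [move: n_gt0; rewrite n0 | right]. Qed.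

Lemma in_Delta_ext n alpha x y :
  (forall k, k < 2 ^ n -> x k = y k) -> in_Delta n alpha x -> in_Delta n alpha y.
Proof.
move=> xy; rewrite /in_Delta; congr (Sg_pow _ _ _).
by apply: functional_extensionality => k; apply: xy.
Qed.

Lemma in_Delta_cvec n alpha i a b : i < n -> alpha i a b ->
  in_Delta n alpha (fun k => if tb k i then b else a).
Proof.
move=> i_lt ab S _; apply; exists i; split=> //; exists a, b; split=> // k.
by rewrite /cvec bitE.
Qed.

Lemma in_Delta_eval n alpha V (t : term ar V) (xs : V -> nat -> A) :
  (forall v, in_Delta n alpha (xs v)) -> in_Delta n alpha (fun k => eval op (xs^~ k) t).
Proof. exact: (Sg_pow_eval t (xs := fun v (k : 'I_(2 ^ n)) => xs v k)). Qed.

Lemma in_Delta_comp n alpha n' alpha' (phi : nat -> nat) x :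
  (forall k, k < 2 ^ n' -> phi k < 2 ^ n) ->
  (forall i a b, i < n -> alpha i a b ->
     in_Delta n' alpha' (fun k => if tb (phi k) i then b else a)) ->
  in_Delta n alpha x -> in_Delta n' alpha' (x \o phi).
Proof.
move=> phi_lt phi_gen x_in.
pose phi' (k : 'I_(2 ^ n')) := Ordinal (phi_lt k (ltn_ord k)).
apply: (Sg_pow_comp (phi := phi') _ x_in) => z [i [i_lt [a [b [ab zE]]]]].
have -> : z \o phi' = fun k : 'I_(2 ^ n') => if tb (phi k) i then b else a.
  by apply: functional_extensionality => k; rewrite /= zE /cvec bitE.
exact: phi_gen.
Qed.

Definition cube_val V (t : term ar V) (d : V -> nat) (a b : V -> A) (k : nat) : A :=
  eval op (fun v => if tb k (d v) then b v else a v) t.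

Lemma in_Delta_cube_val n alpha V (t : term ar V) d a b :
  (forall v, d v < n /\ alpha (d v) (a v) (b v)) -> in_Delta n alpha (cube_val t d a b).
Proof. by move=> dab; apply: in_Delta_eval => v; case: (dab v); apply: in_Delta_cvec. Qed.

Lemma strong_cube_term_land n (q : term ar 'I_(2 ^ n - 1)) a k :
  strong_cube_term op q -> k < 2 ^ n -> k != 2 ^ n - 1 ->
  eval op (fun m : 'I_(2 ^ n - 1) => a (Nat.land k m)) q = a k.
Proof.
move=> q_cube k_lt k_top; have [j j_lt kj] := exists_testbit_false k_lt k_top.
have land_rho m : Nat.land k (rho j m) = Nat.land k m.
  apply: Nat.bits_inj => i; rewrite !Nat.land_spec testbit_rho.
  by case: (eqVneq j i) => [<-|]; rewrite ?kj ?andbT.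
have := q_cube j j_lt (fun m => a (Nat.land k m)).
rewrite /= land_rho [Nat.land k _]Nat.land_comm land_top ?top_ltn // => <-.
by congr eval; apply: functional_extensionality => m; rewrite land_rho.
Qed.

Section Congruences.
Variables (n : nat) (alpha : nat -> A -> A -> Prop).
Hypothesis n_gt0 : 0 < n.
Hypothesis alpha_cong : forall i, i < n -> congruence op (alpha i).

Lemma alpha_refl i x : i < n -> alpha i x x.
Proof. by case/alpha_cong. Qed.

Lemma alpha_sym i x y : i < n -> alpha i x y -> alpha i y x.
Proof. by case/alpha_cong=> _ sym _ _; apply: sym. Qed.

Lemma in_Delta_const c : in_Delta n alpha (fun=> c).
Proof.
apply: in_Delta_ext (in_Delta_cvec n_gt0 (alpha_refl c n_gt0)) => k _.
by case: ifP.
Qed.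

Lemma in_Delta_clearbit i x :
  in_Delta n alpha x -> in_Delta n alpha (fun k => x (Nat.clearbit k i)).
Proof.
apply: in_Delta_comp => [k|j a b j_lt ab]; first exact: clearbit_ltn_pow2.
case: (eqVneq i j) => [->|ne].
  by apply: in_Delta_ext (in_Delta_const a) => k _; rewrite testbit_clearbit eqxx andbF.
by apply: in_Delta_ext (in_Delta_cvec j_lt ab) => k _; rewrite testbit_clearbit ne andbT.
Qed.

Lemma in_Delta_lxor M x : M < 2 ^ n ->
  in_Delta n alpha x -> in_Delta n alpha (fun k => x (Nat.lxor k M)).
Proof.
move=> M_lt; apply: in_Delta_comp => [k k_lt|i a b i_lt ab]; first exact: lxor_ltn_pow2.
case Mi: (tb M i).
  apply: in_Delta_ext (in_Delta_cvec i_lt (alpha_sym i_lt ab)) => k _.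
  by rewrite Nat.lxor_spec Mi; case: (tb k i).
by apply: in_Delta_ext (in_Delta_cvec i_lt ab) => k _; rewrite Nat.lxor_spec Mi; case: (tb k i).
Qed.

Lemma in_Delta_discrete i x : i < n -> (forall a b, alpha i a b -> a = b) ->
  in_Delta n alpha x -> forall k, k < 2 ^ n -> x (Nat.clearbit k i) = x k.
Proof.
move=> i_lt discrete x_in k k_lt.
pose clr (k : 'I_(2 ^ n)) := Ordinal (clearbit_ltn_pow2 i (ltn_ord k)).
pose S (z : 'I_(2 ^ n) -> A) := forall k, z (clr k) = z k.
suff: S (fun k : 'I_(2 ^ n) => x k) by move/(_ (Ordinal k_lt)).
apply: x_in => [f xs xsS k'|z [j [j_lt [a [b [ab zE]]]]] k'].
  by congr (op _); apply: functional_extensionality => j; apply: xsS.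
rewrite !zE /cvec !bitE /= testbit_clearbit.
by case: (eqVneq i j) => [ij|]; rewrite ?andbT // -ij in ab *; rewrite (discrete _ _ ab) !if_same.
Qed.

Lemma in_Delta_cube_val_rep x : in_Delta n alpha x ->
  exists (t : term ar nat) (d : nat -> nat) (a b : nat -> A),
    (forall v, d v < n /\ alpha (d v) (a v) (b v)) /\
    forall k, k < 2 ^ n -> x k = cube_val t d a b k.
Proof.
move=> x_in; have const_gen : @Delta_gen n alpha (fun=> x 0).
  exists 0; split=> //; exists (x 0), (x 0); split=> [|k]; first exact: alpha_refl.
  by rewrite /cvec if_same.
have [t [g [g_gen xE]]] := Sg_pow_term const_gen x_in.
have /functional_choice [dab dabP] : forall v, exists dab : nat * A * A,
    [/\ dab.1.1 < n, alpha dab.1.1 dab.1.2 dab.2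
       & forall k, g v k = @cvec A n dab.1.1 dab.1.2 dab.2 k].
  by move=> v; have [i [i_lt [a [b [ab gE]]]]] := g_gen v; exists (i, a, b).
exists t, (fun v => (dab v).1.1), (fun v => (dab v).1.2), (fun v => (dab v).2).
split=> [v|k k_lt]; first by case: (dabP v).
rewrite (congr1 (fun x => x (Ordinal k_lt)) xE) /cube_val; congr eval.
by apply: functional_extensionality => v; case: (dabP v) => _ _ ->; rewrite /cvec bitE.
Qed.

(* The [val] of [centralizes], as a function that can be rewritten. *)
Definition centralizer_val (m : 'I_n -> nat) (a b : forall i : 'I_n, 'I_(m i) -> A)
    (t : term ar {i : 'I_n & 'I_(m i)}) (s : nat -> bool) (last : bool) : A :=
  eval op (fun v : {i : 'I_n & 'I_(m i)} =>
              let i := projT1 v in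
              if (i == n.-1 :> nat) then (if last then b i (projT2 v) else a i (projT2 v))
              else (if s i then b i (projT2 v) else a i (projT2 v))) t.

Lemma centralizer_val_cube (m : 'I_n -> nat) (a b : forall i : 'I_n, 'I_(m i) -> A)
    (t : term ar {i : 'I_n & 'I_(m i)}) s last k :
  (forall i, i < n -> tb k i = if i == n.-1 then last else s i) ->
  centralizer_val a b t s last =
  cube_val t (fun v => projT1 v) (fun v => a _ (projT2 v)) (fun v => b _ (projT2 v)) k.
Proof.
move=> kE; congr eval; apply: functional_extensionality => -[i j] /=.
by rewrite kE //; case: ifP.
Qed.

(* Bulatov's term condition, read on the values [c k], [k < 2 ^ n], of a term at the
   vertices of a cube. *)
Definition top_edge_closed (gamma : A -> A -> Prop) (c : nat -> A) : Prop :=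
  (forall q, q < 2 ^ n -> tb q n.-1 -> q != 2 ^ n - 1 ->
     gamma (c (Nat.clearbit q n.-1)) (c q)) ->
  gamma (c (Nat.clearbit (2 ^ n - 1) n.-1)) (c (2 ^ n - 1)).

Lemma centralizesP gamma : centralizes op n alpha gamma <->
  forall (m : 'I_n -> nat) (a b : forall i : 'I_n, 'I_(m i) -> A),
    (forall i : 'I_n, exists k, a i k <> b i k) ->
    (forall (i : 'I_n) k, alpha i (a i k) (b i k)) ->
    forall t : term ar {i : 'I_n & 'I_(m i)},
      top_edge_closed gamma
        (cube_val t (fun v => projT1 v) (fun v => a _ (projT2 v)) (fun v => b _ (projT2 v))).
Proof.
have n1_lt : n.-1 < n by rewrite prednK.
have clr_top i : i < n -> tb (Nat.clearbit (2 ^ n - 1) n.-1) i = if i == n.-1 then false else true.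
  by move=> i_lt; rewrite testbit_clearbit testbit_top i_lt eq_sym; case: eqP.
have top i : i < n -> tb (2 ^ n - 1) i = if i == n.-1 then true else true.
  by move=> i_lt; rewrite testbit_top i_lt if_same.
split=> [cent m a b nd ab t faces|closed m a b nd ab t val cond].
  rewrite -(centralizer_val_cube a b t (clr_top)) -(centralizer_val_cube a b t top).
  apply: (cent m a b nd ab t) => s [i [i_lt si]].
  pose q := of_bits (fun j => (j == n.-1) || s j) n.
  have qE j : j < n -> tb q j = if j == n.-1 then true else s j.
    by move=> j_lt; rewrite testbit_of_bits j_lt; case: eqP.
  have q_n1 : tb q n.-1 by rewrite qE ?eqxx.
  change (gamma (centralizer_val a b t s false) (centralizer_val a b t s true)).
  rewrite (centralizer_val_cube a b t (k := Nat.clearbit q n.-1)); last first.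
    by move=> j j_lt; rewrite testbit_clearbit qE // eq_sym; case: eqP; rewrite ?andbT.
  rewrite (centralizer_val_cube a b t (k := q)) //; apply: faces q_n1 _; first exact: of_bits_ltn.
  have i_lt' : i < n by lia.
  by apply/eqP => q_top; move: (qE i i_lt'); rewrite q_top testbit_top i_lt' si ifF //; lia.
have valE s l k : (forall i, i < n -> tb k i = if i == n.-1 then l else s i) ->
    val s l = cube_val t (fun v => projT1 v) (fun v => a _ (projT2 v)) (fun v => b _ (projT2 v)) k.
  exact: centralizer_val_cube.
rewrite (valE _ _ _ clr_top) (valE _ _ _ top); apply: closed => // q q_lt q_n1 q_top.
have [j j_lt qj] := exists_testbit_false q_lt q_top.
have qE l i : i < n ->
    tb (if l then q else Nat.clearbit q n.-1) i = if i == n.-1 then l else tb q i.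
  case: l => i_lt; rewrite ?testbit_clearbit; case: (eqVneq i n.-1) => [->|ne] //=.
  - by rewrite andbF.
  - by rewrite andbT.
rewrite -(valE _ _ _ (qE false)) -(valE _ _ _ (qE true)); apply: cond; exists j; split=> //.
have j_n1 : j != n.-1 by apply: contraTneq q_n1 => <-; rewrite qj.
lia.
Qed.

(* The term is turned into one over [{i : 'I_n & 'I_N.+1}]; the extra last coordinate of each
   tuple carries a pair witnessing that [alpha i] is not the identity. *)
Lemma centralizes_top_edge_closed gamma (t : term ar nat) d a b :
  centralizes op n alpha gamma ->
  (forall i, i < n -> exists a b, alpha i a b /\ a <> b) ->
  (forall v, d v < n /\ alpha (d v) (a v) (b v)) ->
  top_edge_closed gamma (cube_val t d a b).
Proof.
move=> /centralizesP cent nondegenerate dab; have [N t_below] := exists_vars_below t.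
have /fin_all_exists [w wP] : forall i : 'I_n, exists w : A * A, alpha i w.1 w.2 /\ w.1 <> w.2.
  by move=> i; have [a' [b' ab']] := nondegenerate i (ltn_ord i); exists (a', b').
pose a' (i : 'I_n) (k : 'I_N.+1) := if (k < N) && (d k == i) then a k else (w i).1.
pose b' (i : 'I_n) (k : 'I_N.+1) := if (k < N) && (d k == i) then b k else (w i).2.
pose g v := existT (fun i : 'I_n => 'I_N.+1) (Ordinal (dab v).1) (inord v).
have <- : cube_val (rename g t) (fun v => projT1 v) (fun v => a' (projT1 v) (projT2 v))
                (fun v => b' (projT1 v) (projT2 v)) = cube_val t d a b.
  apply: functional_extensionality => k; rewrite /cube_val eval_rename.
  apply: (eq_eval_vars_below t_below) => v v_lt /=.
  by rewrite /a' /b' /= inordK ?v_lt ?eqxx // ltnS ltnW.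
apply: (cent (fun=> N.+1) a' b') => [i|i k].
- by exists ord_max; rewrite /a' /b' /= ltnn; case: (wP i).
- rewrite /a' /b'; case: ifP => [/andP [_ /eqP <-]|_]; first by case: (dab k).
  by case: (wP i).
Qed.

Lemma drop_congE j l : j < n -> l < n.-1 -> drop_cong n j alpha l = alpha (bump j l).
Proof. by move=> j_lt l_lt; rewrite /drop_cong nth_drop_index. Qed.

Lemma in_Delta_face j a : j < n -> in_Delta n alpha a ->
  Delta op n.-1 (drop_cong n j alpha) (face0 n j a).
Proof.
move=> j_lt a_in; case: (posnP n.-1) => [->|n1_gt0]; [by left | right].
apply: (@in_Delta_ext _ _ (a \o insbit j)) => [k k_lt|]; first by rewrite /face0 nth_face_index.
apply: in_Delta_comp a_in => [k|i x y i_lt xy]; first exact: insbit_ltn.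
case: (eqVneq i j) => [->|i_ne].
  have xx : drop_cong n j alpha 0 x x by rewrite drop_congE //; apply/alpha_refl/bump_ltn.
  by apply: in_Delta_ext (in_Delta_cvec n1_gt0 xx) => k _; rewrite testbit_insbit_id if_same.
have l_lt := unbump_ltn j_lt i_lt i_ne.
have bumpK : bump j (unbump j i) = i by rewrite unbumpK // inE.
have xy' : drop_cong n j alpha (unbump j i) x y by rewrite drop_congE // bumpK.
by apply: in_Delta_ext (in_Delta_cvec l_lt xy') => k _; rewrite -(testbit_insbit_bump j) bumpK.
Qed.

Lemma in_Delta_faces_land a (q : term ar 'I_(2 ^ n - 1)) :
  (forall j, j < n -> Delta op n.-1 (drop_cong n j alpha) (face0 n j a)) ->
  in_Delta n alpha (fun k => eval op (fun m : 'I_(2 ^ n - 1) => a (Nat.land k m)) q).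
Proof.
move=> faces; apply: in_Delta_eval => m.
have m_lt : m < 2 ^ n by apply: leq_trans (ltn_ord m) _; rewrite leq_subr.
have [j j_lt mj] := exists_testbit_false m_lt (negbT (ltn_eqF (ltn_ord m))).
case: (faces j j_lt) => [n1_0|face_in].
  have n1 : n = 1 by lia.
  have -> : (m : nat) = 0 by move: (ltn_ord m); move: (m : nat) => m'; rewrite n1; lia.
  by apply: in_Delta_ext (in_Delta_const (a 0)) => k _; rewrite Nat.land_0_r.
pose phi k := delbit j (Nat.land k m).
have phi_lt k : k < 2 ^ n -> phi k < 2 ^ n.-1 by move=> k_lt; apply/delbit_ltn/land_ltn_pow2.
apply: (@in_Delta_ext _ _ (face0 n j a \o phi)) => [k k_lt|].
  by rewrite /= /face0 nth_face_index ?phi_lt // delbitK // Nat.land_spec mj andbF.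
apply: in_Delta_comp face_in => // i x y i_lt; rewrite drop_congE // => xy.
case mi: (tb m (bump j i)).
  apply: in_Delta_ext (in_Delta_cvec (bump_ltn j i_lt) xy) => k _.
  by rewrite testbit_delbit Nat.land_spec mi andbT.
by apply: in_Delta_ext (in_Delta_const x) => k _; rewrite testbit_delbit Nat.land_spec mi andbF.
Qed.

Section Malcev.
Variable p : term ar 'I_3.
Hypothesis p_malcev : forall x y : A,
  eval op (fun i : 'I_3 => nth y [:: x; x; y] i) p = y /\
  eval op (fun i : 'I_3 => nth y [:: y; x; x] i) p = y.

Definition mal x y z := eval op (fun i : 'I_3 => nth z [:: x; y; z] i) p.

Lemma mal_xxy x y : mal x x y = y.
Proof. exact: (p_malcev x y).1. Qed.

Lemma mal_yxx x y : mal y x x = y.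
Proof.
rewrite -[RHS](p_malcev x y).2 /mal; congr eval.
by apply: functional_extensionality => -[[|[|[]]]].
Qed.

Lemma in_Delta_mal X Y Z : in_Delta n alpha X -> in_Delta n alpha Y -> in_Delta n alpha Z ->
  in_Delta n alpha (fun k => mal (X k) (Y k) (Z k)).
Proof.
move=> X_in Y_in Z_in.
have := in_Delta_eval p (xs := fun i : 'I_3 => nth Z [:: X; Y; Z] i).
rewrite /mal; have -> // : (fun k => eval op ((fun i : 'I_3 => nth Z [:: X; Y; Z] i)^~ k) p) =
                  fun k => eval op (fun i : 'I_3 => nth (Z k) [:: X k; Y k; Z k] i) p.
  apply: functional_extensionality => k; congr eval.
  by apply: functional_extensionality => -[[|[|[]]]].
by apply; case=> -[|[|[]]].
Qed.

Definition corner x y := in_Delta n alpha (fun k => if k == 2 ^ n - 1 then y else x).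

Lemma corner_congruence : congruence op corner.
Proof.
split=> [x|x y xy|x y z xy yz|f xs ys xys].
- by apply: in_Delta_ext (in_Delta_const x) => k _; rewrite if_same.
- apply: in_Delta_ext (in_Delta_mal (in_Delta_const x) xy (in_Delta_const y)) => k _.
  by case: ifP => _; rewrite ?mal_xxy ?mal_yxx.
- apply: in_Delta_ext (in_Delta_mal xy (in_Delta_const y) yz) => k _.
  by case: ifP => _; rewrite ?mal_xxy ?mal_yxx.
- have := @Sg_pow_subuniverse _ (@Delta_gen n alpha) f
    (fun j (k : 'I_(2 ^ n)) => if (k : nat) == 2 ^ n - 1 then ys j else xs j) xys.
  rewrite /corner /in_Delta; congr (Sg_pow _ _ _).
  by apply: functional_extensionality => k; case: ifP.
Qed.

Lemma in_Delta_update c q w : in_Delta n alpha c ->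
  in_Delta n alpha (fun j => if j == q then c q else w) ->
  in_Delta n alpha (fun j => if j == q then w else c j).
Proof.
move=> c_in point_in.
apply: in_Delta_ext (in_Delta_mal c_in point_in (in_Delta_const w)) => k _ /=.
by case: (eqVneq k q) => [->|_]; rewrite ?mal_xxy ?mal_yxx.
Qed.

Lemma in_Delta_patch c z (L : seq nat) : uniq L -> in_Delta n alpha c ->
  (forall q, q \in L -> in_Delta n alpha (fun j => if j == q then c q else z q)) ->
  in_Delta n alpha (fun j => if j \in L then z j else c j).
Proof.
elim: L => [|q L IH] /= => [_ c_in _|/andP [qL uL] c_in points].
  exact: in_Delta_ext c_in.
have L_in := IH uL c_in (fun q' q'L => points q' (mem_behead (s := q :: L) q'L)).
have := in_Delta_update L_in (w := z q) (q := q).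
rewrite (negbTE qL) => /(_ (points q (mem_head q L))).
by apply: in_Delta_ext => k _; rewrite in_cons; case: (eqVneq k q) => [->|].
Qed.

Lemma corner_point x y q : q < 2 ^ n -> corner x y ->
  in_Delta n alpha (fun j => if j == q then y else x).
Proof.
move=> q_lt xy; pose M := Nat.lxor (2 ^ n - 1) q.
have flip k : (Nat.lxor k M == 2 ^ n - 1) = (k == q).
  apply/eqP/eqP => [kM|->]; last by rewrite Nat.lxor_comm lxorKr.
  by rewrite -(lxorKr k M) kM lxorKl.
have := in_Delta_lxor (lxor_ltn_pow2 (top_ltn n) q_lt) xy.
by apply: in_Delta_ext => k _; rewrite flip.
Qed.

Lemma corner_top_edge_closed c : in_Delta n alpha c -> top_edge_closed corner c.
Proof.
move=> c_in faces; set top := 2 ^ n - 1; set clr := Nat.clearbit ^~ n.-1.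
pose P := [seq q <- iota 0 (2 ^ n) | tb q n.-1 && (q != top)].
have P_clr k : clr k \notin P by rewrite mem_filter testbit_clearbit eqxx andbF.
have patched : in_Delta n alpha (fun j => if j \in P then c (clr j) else c j).
  apply: in_Delta_patch (filter_uniq _ (iota_uniq 0 _)) c_in _ => q.
  rewrite mem_filter mem_iota => /andP [/andP [q_n1 q_top] /= q_lt].
  exact: corner_point q_lt (faces q q_lt q_n1 q_top).
have patchedE k : k < 2 ^ n -> k != top ->
    (if k \in P then c (clr k) else c k) = c (clr k).
  move=> k_lt k_top; rewrite mem_filter mem_iota k_lt k_top andbT /=.
  case k_n1: (tb k n.-1) => //; congr c; apply: Nat.bits_inj => i.
  by rewrite testbit_clearbit; case: (eqVneq n.-1 i) => [<-|]; rewrite ?k_n1 ?andbT.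
have := in_Delta_mal patched (in_Delta_clearbit n.-1 patched) (in_Delta_const (c (clr top))).
apply: in_Delta_ext => k k_lt /=; rewrite (negbTE (P_clr k)).
case: (eqVneq k top) => [->|k_top]; last by rewrite patchedE ?mal_xxy.
by rewrite ifN ?mal_yxx // mem_filter eqxx andbF.
Qed.

Lemma centralizes_corner : centralizes op n alpha corner.
Proof.
apply/centralizesP => m a b _ ab t; apply: corner_top_edge_closed.
by apply: in_Delta_cube_val => v; split; [exact: ltn_ord | exact: ab].
Qed.

(* If some [alpha i] is the identity, [centralizes] holds vacuously (its tuples must differ
   somewhere); then Delta does not depend on bit [i] and [corner] is the equality. *)
Lemma corner_sub_centralizing gamma x y : congruence op gamma -> centralizes op n alpha gamma ->
  corner x y -> gamma x y.
Proof.
move=> [gamma_refl _ _ _] cent xy.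
have [t [d [a [b [dab xyE]]]]] := in_Delta_cube_val_rep xy.
have n1_lt : n.-1 < n by rewrite prednK.
have clr_ne k i : i < n -> Nat.clearbit k i != 2 ^ n - 1.
  move=> i_lt; apply/eqP => /(congr1 (tb^~ i)).
  by rewrite testbit_clearbit testbit_top i_lt eqxx andbF.
case: (classic (exists2 i, i < n & forall a b, alpha i a b -> a = b)).
  case=> i i_lt discrete; have := in_Delta_discrete i_lt discrete xy (top_ltn n).
  by rewrite eqxx ifN ?clr_ne // => ->.
move=> nondegenerate.
have: top_edge_closed gamma (cube_val t d a b).
  apply: centralizes_top_edge_closed cent _ dab => i i_lt.
  apply: NNPP => no_pair; apply: nondegenerate; exists i => // a' b' ab'.
  by apply: NNPP => ne; apply: no_pair; exists a', b'.
rewrite /top_edge_closed -!xyE ?clearbit_ltn_pow2 ?top_ltn // eqxx ifN ?clr_ne //.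
apply=> q q_lt _ q_top; rewrite -!xyE ?clearbit_ltn_pow2 //= !ifN ?clr_ne //.
Qed.

Lemma hcomm_corner x y : hcomm op n alpha x y <-> corner x y.
Proof.
split=> [|xy gamma gamma_cong cent]; last exact: corner_sub_centralizing.
by apply; [exact: corner_congruence | exact: centralizes_corner].
Qed.

Lemma Delta_strong_cube_termP q : strong_cube_term op q -> forall a : nat -> A,
  Delta op n alpha a <->
  (forall j, j < n -> Delta op n.-1 (drop_cong n j alpha) (face0 n j a)) /\
  hcomm op n alpha (eval op (fun k : 'I_(2 ^ n - 1) => a k) q) (a (2 ^ n - 1)).
Proof.
move=> q_cube a; rewrite DeltaE // hcomm_corner.
set qa := eval op _ q; pose d k := eval op (fun m : 'I_(2 ^ n - 1) => a (Nat.land k m)) q.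
have d_top : d (2 ^ n - 1) = qa.
  congr eval; apply: functional_extensionality => m; rewrite land_top //.
  by apply: leq_trans (ltn_ord m) _; rewrite leq_subr.
have dE k : k < 2 ^ n -> k != 2 ^ n - 1 -> d k = a k by apply: strong_cube_term_land.
split=> [a_in|[faces corner_qa]].
  have faces j : j < n -> Delta op n.-1 (drop_cong n j alpha) (face0 n j a).
    by move=> j_lt; apply: in_Delta_face.
  split=> //; have := in_Delta_mal a_in (in_Delta_faces_land q faces) (in_Delta_const qa).
  apply: in_Delta_ext => k k_lt; rewrite -/(d k).
  by case: (eqVneq k (2 ^ n - 1)) => [->|k_top]; rewrite ?d_top ?dE ?mal_yxx ?mal_xxy.
have := in_Delta_mal (in_Delta_faces_land q faces) (in_Delta_const qa) corner_qa.
apply: in_Delta_ext => k k_lt; rewrite -/(d k).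
by case: (eqVneq k (2 ^ n - 1)) => [->|k_top]; rewrite ?d_top ?dE ?mal_yxx ?mal_xxy.
Qed.

End Malcev.
End Congruences.
End Algebra.

Theorem mainTheorem9 (F : Type) (ar : F -> nat) (A : Type)
    (op : forall f : F, ('I_(ar f) -> A) -> A)
    (n : nat) (q : term ar 'I_(2 ^ n - 1)) (alpha : nat -> A -> A -> Prop) :
  has_malcev_term op ->
  1 <= n ->
  strong_cube_term op q ->
  (forall i, i < n -> congruence op (alpha i)) ->
  forall a : nat -> A,
    Delta op n alpha a <->
    ((forall j, j < n -> Delta op n.-1 (drop_cong n j alpha) (face0 n j a)) /\
     hcomm op n alpha (eval op (fun k : 'I_(2 ^ n - 1) => a k) q) (a (2 ^ n - 1))).
Proof.
move=> [p p_malcev] n_gt0 q_cube alpha_cong.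
exact: Delta_strong_cube_termP p_malcev q q_cube.
Qed.
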